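(* For a commutative ring $R$ the following are equivalent: (i) $R$ is a quasi p.f. ring; (ii) $R_{\mathfrak p}$ is a primary ring for all $\mathfrak p\in\operatorname{Spec}(R)$; (iii) $R_{\mathfrak m}$ is a primary ring for all maximal ideals $\mathfrak m$ of $R$; (iv) $\ker(R\to R_{\mathfrak p})$ is a pure ideal for every minimal prime ideal $\mathfrak p$ of $R$; (v) $\ker(R\to R_{\mathfrak m})$ is a primary ideal for every maximal ideal $\mathfrak m$ of $R$.
   Context: An ideal $I$ is quasi-pure if for each $f\in I$ there is $g\in I$ with $f(1-g)$ nilpotent. $R$ is a quasi p.f. ring if $\operatorname{Ann}(f)$ is quasi-pure for every $f\in R$. An ideal $I$ is pure if for each $f\in I$ there is $g\in I$ with $f(1-g)=0$. A ring is primary if its zero ideal is primary (every zero-divisor is nilpotent). *)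

From mathcomp Require Import all_boot all_algebra.
Set Implicit Arguments. Unset Strict Implicit. Unset Printing Implicit Defensive.
Import GRing.Theory.
Local Open Scope ring_scope.

Section Ideals.
Variable R : comPzRingType.
Implicit Types (I J p m q : R -> Prop) (a b f g x y : R).

Definition is_ideal I : Prop :=
  I 0 /\ (forall x y, I x -> I y -> I (x + y)) /\ (forall a x, I x -> I (a * x)).

Definition proper_ideal I : Prop := is_ideal I /\ ~ I 1.

Definition prime_ideal p : Prop :=
  proper_ideal p /\ (forall a b, p (a * b) -> p a \/ p b).

Definition maximal_ideal m : Prop :=
  proper_ideal m /\
  (forall J, is_ideal J -> (forall x, m x -> J x) -> (forall x, J x -> m x) \/ J 1).

Definition minimal_prime p : Prop :=
  prime_ideal p /\
  (forall q, prime_ideal q -> (forall x, q x -> p x) -> forall x, p x -> q x).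

Definition nilpotent x : Prop := exists n : nat, x ^+ n = 0.

Definition Ann f : R -> Prop := fun x => x * f = 0.

Definition quasi_pure I : Prop :=
  forall f, I f -> exists g, I g /\ nilpotent (f * (1 - g)).

Definition pure_ideal I : Prop :=
  forall f, I f -> exists g, I g /\ f * (1 - g) = 0.

Definition primary_ideal I : Prop :=
  proper_ideal I /\ (forall x y, I (x * y) -> ~ I x -> exists n : nat, I (y ^+ n)).

Definition quasi_pf_ring : Prop := forall f, quasi_pure (Ann f).

(* Elements of R_p are fractions a/s, represented by pairs (a, s) with ~ p s;
   equality of fractions a/s = b/t iff exists u notin p, u(at - bs) = 0. *)
Definition frac p (x : R * R) : Prop := ~ p x.2.

Definition loc_eq p (x y : R * R) : Prop :=
  exists u, ~ p u /\ u * (x.1 * y.2 - y.1 * x.2) = 0.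

Definition loc_mul (x y : R * R) : R * R := (x.1 * y.1, x.2 * y.2).
Definition loc_pow (x : R * R) (n : nat) : R * R := (x.1 ^+ n, x.2 ^+ n).
Definition loc_zero : R * R := (0, 1).
Definition loc_one : R * R := (1, 1).

(* R_p is a primary ring: its zero ideal is primary, i.e. R_p is nonzero and
   every zero-divisor of R_p is nilpotent. *)
Definition localization_primary p : Prop :=
  ~ loc_eq p loc_one loc_zero /\
  forall x y : R * R, frac p x -> frac p y ->
    loc_eq p (loc_mul x y) loc_zero -> ~ loc_eq p y loc_zero ->
    exists n : nat, loc_eq p (loc_pow x n) loc_zero.

Definition loc_ker p : R -> Prop := fun a => loc_eq p (a, 1) loc_zero.

End Ideals.

From Pilot Require Import Defs.
From mathcomp Require Import all_boot all_algebra.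
From mathcomp Require Import ring zify.
From mathcomp Require Import boolp classical_sets.
Import GRing.Theory.
Set Implicit Arguments. Unset Strict Implicit. Unset Printing Implicit Defensive.
Local Open Scope ring_scope.
Local Open Scope classical_set_scope.

(* Write K_p for the kernel of R -> R_p, the elements killed by some u outside
   p.  Both localization conditions just say that K_p is a primary ideal, and
   quasi-purity of Ann f yields this for every prime p.  Conversely, assume
   K_m is primary for every maximal m, and let x f = 0.  Then Ann f is
   comaximal with every ideal I containing all v with v x^n = 0: a maximal m
   containing Ann f + I would give f x in K_m, f outside K_m, hence some
   v x^n = 0 with v outside m although v lies in I.  Taking for I the y with
   x y nilpotent gives (i); taking I = K_p with x outside p gives purity of K_p.
   Finally, below every maximal m lies a prime p with p R_p nil (the complement
   of a maximal multiplicative set containing R \ m and avoiding 0); such a p is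
   a minimal prime, K_p is primary, and purity of K_p forces K_m = K_p. *)

Lemma Zorn_nonempty_chains (T : Type) (P : set (set T)) (X0 : set T) :
  P X0 ->
  (forall F, F `<=` P -> total_on F subset -> F !=set0 ->
     P (\bigcup_(X in F) X)) ->
  exists2 Y, P Y & forall Z, P Z -> Y `<=` Z -> Z `<=` Y.
Proof.
move=> PX0 Pchain; pose le (X Y : {X | P X}) := `[< sval X `<=` sval Y >].
have [Y Ymax] : exists Y, premaximal le Y.
  apply: (ZL_preorder (exist _ X0 PX0)).
  - by move=> X; apply/asboolP.
  - by move=> X Y Z /asboolP XY /asboolP YZ; apply/asboolP; apply: subset_trans YZ.
  move=> A Atot; have [[X AX]|A0] := pselect (A !=set0); last first.
    by exists (exist _ X0 PX0) => X AX; case: A0; exists X.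
  have PU : P (\bigcup_(Z in sval @` A) Z).
    apply: Pchain; first by move=> _ [Z _ <-]; apply: svalP.
      move=> _ _ [Z AZ <-] [Z' AZ' <-].
      by case: (Atot _ _ AZ AZ') => /asboolP; [left|right].
    by exists (sval X), X.
  by exists (exist _ _ PU) => Z AZ; apply/asboolP; apply: (bigcup_sup (imageP sval AZ)).
exists (sval Y); first exact: svalP.
by move=> Z PZ YZ; apply/asboolP; apply: (Ymax (exist _ Z PZ)); apply/asboolP.
Qed.

Section Ideals.
Variable R : comPzRingType.
Implicit Types (I J p m : set R) (a b c f g r x y z : R).

Definition ideal_add I J : set R := fun z => exists2 x, I x & J (z - x).

Lemma is_ideal_add I J : is_ideal I -> is_ideal J -> is_ideal (ideal_add I J).
Proof.
move=> [I0 [ID IM]] [J0 [JD JM]]; split; last split.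
- by exists 0; rewrite // subr0.
- move=> z1 z2 [x1 Ix1 Jz1] [x2 Ix2 Jz2]; exists (x1 + x2); first exact: ID.
  by rewrite opprD addrACA; apply: JD.
- move=> c z [x Ix Jz]; exists (c * x); first exact: IM.
  by rewrite -mulrBr; apply: JM.
Qed.

Lemma is_ideal_Ann f : is_ideal (Ann f).
Proof.
rewrite /Ann; split; last split; first by rewrite mul0r.
- by move=> x y xf yf; rewrite mulrDl xf yf addr0.
- by move=> a x xf; rewrite -mulrA xf mulr0.
Qed.

Lemma is_ideal_bigcup (F : set (set R)) :
  (forall I, F I -> is_ideal I) -> total_on F subset -> F !=set0 ->
  is_ideal (\bigcup_(I in F) I).
Proof.
move=> Fideal Ftot [I FI]; split; last split.
- by exists I => //; case: (Fideal _ FI).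
- move=> x y [X FX Xx] [Y FY Yy].
  have [XY|YX] := Ftot _ _ FX FY.
  + by exists Y => //; case: (Fideal _ FY) => _ [YD _]; apply: YD => //; apply: XY.
  + by exists X => //; case: (Fideal _ FX) => _ [XD _]; apply: XD => //; apply: YX.
- move=> a x [X FX Xx]; exists X => //.
  by case: (Fideal _ FX) => _ [_ XM]; apply: XM.
Qed.

Lemma proper_ideal_1B m g : Defs.proper_ideal m -> m g -> ~ m (1 - g).
Proof.
by move=> [[_ [mD _]] m1] mg m1g; apply: m1; rewrite -(subrK g 1); apply: mD.
Qed.

Lemma ideal_sub_maximal I :
  is_ideal I -> ~ I 1 -> exists2 m, maximal_ideal m & I `<=` m.
Proof.
move=> Iideal I1.
pose P J := [/\ is_ideal J, ~ J 1 & I `<=` J].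
have [M [Mideal M1 IM] Mmax] : exists2 M, P M & forall J, P J -> M `<=` J -> J `<=` M.
  apply: (Zorn_nonempty_chains (X0 := I)) => [|F FP Ftot Fn0]; first by split.
  split; first by apply: is_ideal_bigcup => // J /FP [].
    by move=> [J /FP [] _ J1 _]; apply: J1.
  by case: Fn0 => J FJ x Ix; exists J => //; case: (FP _ FJ) => _ _; apply.
exists M => //; split=> // J Jideal MJ.
have [J1|J1] := pselect (J 1); [by right | left].
by apply: Mmax => //; split => //; apply: subset_trans MJ.
Qed.

Lemma prime_nmul p a b : prime_ideal p -> ~ p a -> ~ p b -> ~ p (a * b).
Proof. by move=> [_ pM] pa pb /pM []. Qed.

Lemma prime_nexp p a n : prime_ideal p -> ~ p a -> ~ p (a ^+ n).
Proof.
move=> pp pa; elim: n => [|n IHn]; first by rewrite expr0; case: pp => [[]].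
by rewrite exprS; apply: prime_nmul.
Qed.

Lemma maximal_prime m : maximal_ideal m -> prime_ideal m.
Proof.
move=> [[mideal m1] mmax]; split=> // a b mab.
have [ma|ma] := pselect (m a); [by left | right].
pose Ra z := exists r, z = r * a.
have Raideal : is_ideal Ra.
  split; last split; first by exists 0; rewrite mul0r.
  - by move=> _ _ [r ->] [r' ->]; exists (r + r'); rewrite mulrDl.
  - by move=> c _ [r ->]; exists (c * r); rewrite mulrA.
have mJ : m `<=` ideal_add Ra m.
  by move=> x mx; exists 0; [exists 0; rewrite mul0r | rewrite subr0].
have [Jm|[_ [r ->] m1ra]] := mmax _ (is_ideal_add Raideal mideal) mJ.
  case: ma; apply: Jm; exists a; first by exists 1; rewrite mul1r.
  by rewrite subrr; case: mideal.
have -> : b = b * (1 - r * a) + r * (a * b) by ring.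
by case: mideal => _ [mD mM]; apply: mD; apply: mM.
Qed.

End Ideals.

Section Localization.
Variables (R : comPzRingType) (p : set R).
Implicit Types (a g u v x y : R).

Lemma loc_kerP a : loc_ker p a <-> exists2 u, ~ p u & u * a = 0.
Proof.
rewrite /loc_ker /loc_eq /= mul0r subr0 mulr1.
by split=> [[u [pu ua]]|[u pu ua]]; exists u.
Qed.

Lemma loc_eq0 (x : R * R) : loc_eq p x (loc_zero R) <-> loc_ker p x.1.
Proof. by rewrite /loc_ker /loc_eq /= !mul0r. Qed.

Hypothesis pp : prime_ideal p.

Lemma loc_ker_ideal : is_ideal (loc_ker p).
Proof.
split; last split.
- by apply/loc_kerP; exists 1; [case: pp => [[]] | rewrite mulr0].
- move=> x y /loc_kerP [u pu ux] /loc_kerP [v pv vy]; apply/loc_kerP.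
  exists (u * v); first exact: prime_nmul.
  have -> : u * v * (x + y) = v * (u * x) + u * (v * y) by ring.
  by rewrite ux vy !mulr0 addr0.
- move=> a x /loc_kerP [u pu ux]; apply/loc_kerP.
  by exists u; rewrite // mulrCA ux mulr0.
Qed.

Lemma loc_ker_sub : loc_ker p `<=` p.
Proof.
move=> a /loc_kerP [u pu ua]; case: pp => [[[p0 _] _] pM].
by have [] := pM u a; rewrite ?ua.
Qed.

Lemma loc_ker_proper : Defs.proper_ideal (loc_ker p).
Proof.
split; first exact: loc_ker_ideal.
by move/loc_ker_sub; case: pp => [[]].
Qed.

Lemma localization_primaryE :
  localization_primary p <-> primary_ideal (loc_ker p).
Proof.
have p1 : ~ p 1 by case: pp => [[]].
split=> [[_ lp]|[_ Kprimary]].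
  split=> [|x y Kxy Kx]; first exact: loc_ker_proper.
  have [||n /loc_eq0 Kyn] := lp (y, 1) (x, 1) p1 p1; last by exists n.
  - by apply/loc_eq0; rewrite /= mulrC.
  - by move/loc_eq0.
split=> [|x y _ _ /loc_eq0 Kxy /loc_eq0 Ky]; first exact: loc_ker_proper.2.
have [|n Kxn] := Kprimary y.1 x.1 _ Ky; first by rewrite mulrC.
by exists n; apply/loc_eq0.
Qed.

Lemma quasi_pf_loc_ker_primary : quasi_pf_ring R -> primary_ideal (loc_ker p).
Proof.
move=> qpf; split=> [|x y /loc_kerP [u pu uxy] Kx]; first exact: loc_ker_proper.
have uyx : Ann x (u * y) by rewrite /Ann -mulrA (mulrC y) uxy.
have [g [gx [n uyg]]] := qpf x _ uyx.
have pg : p g by apply: contrapT => pg; apply: Kx; apply/loc_kerP; exists g.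
exists n; apply/loc_kerP; exists ((u * (1 - g)) ^+ n).
  apply: prime_nexp; rewrite // mulrC; apply: prime_nmul => //.
  by apply: proper_ideal_1B => //; case: pp.
by rewrite -exprMn -uyg; congr (_ ^+ _); ring.
Qed.

End Localization.

Section MinimalPrimes.
Variable R : comPzRingType.
Implicit Types (S p m q : set R) (a b s t u x y : R).

Lemma mulr_exprD_eq0 s t a b n k :
  s * a ^+ n = 0 -> t * b ^+ k = 0 -> s * t * (a + b) ^+ (n + k) = 0.
Proof.
move=> san tbk; rewrite exprDn mulr_sumr big1 // => i _; rewrite mulrnAr.
have [ltik|leki] := ltnP i k.
- rewrite (_ : n + k - i = n + (k - i))%N; last by lia.
  have -> : s * t * (a ^+ (n + (k - i)) * b ^+ i)
          = s * a ^+ n * (t * a ^+ (k - i) * b ^+ i) by rewrite exprD; ring.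
  by rewrite san mul0r mul0rn.
- rewrite -(subnKC leki) exprD.
  have -> : s * t * (a ^+ (n + k - (k + (i - k))) * (b ^+ k * b ^+ (i - k)))
          = t * b ^+ k * (s * a ^+ (n + k - (k + (i - k))) * b ^+ (i - k)) by ring.
  by rewrite tbk mul0r mul0rn.
Qed.

Lemma nilpotentD a b : nilpotent a -> nilpotent b -> nilpotent (a + b).
Proof.
move=> [n an] [k bk]; exists (n + k)%N.
by have := @mulr_exprD_eq0 1 1 a b n k; rewrite !mul1r; apply.
Qed.

Lemma nilpotentMl a b : nilpotent b -> nilpotent (a * b).
Proof. by move=> [n bn]; exists n; rewrite exprMn bn mulr0. Qed.

Lemma is_ideal_nilpotentM x : is_ideal (fun y => nilpotent (x * y)).
Proof.
split; last split; first by exists 1%N; rewrite mulr0 expr1.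
- by move=> y z xy xz; rewrite mulrDr; apply: nilpotentD.
- by move=> a y xy; rewrite mulrCA; apply: nilpotentMl.
Qed.

Definition mul_closed S := S 1 /\ forall a b, S a -> S b -> S (a * b).

Lemma mul_closed_exp S a n : mul_closed S -> S a -> S (a ^+ n).
Proof.
move=> [S1 SM] Sa; elim: n => [|n IHn]; first by rewrite expr0.
by rewrite exprS; apply: SM.
Qed.

Lemma mul_closed_bigcup (F : set (set R)) :
  (forall S, F S -> mul_closed S) -> total_on F subset -> F !=set0 ->
  mul_closed (\bigcup_(S in F) S).
Proof.
move=> Fmul Ftot [S FS]; split; first by exists S => //; case: (Fmul _ FS).
move=> a b [X FX Xa] [Y FY Yb].
have [XY|YX] := Ftot _ _ FX FY.
- by exists Y => //; case: (Fmul _ FY) => _; apply; first apply: XY.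
- by exists X => //; case: (Fmul _ FX) => _; apply; last apply: YX.
Qed.

Lemma maximal_mul_closed_ann S :
  mul_closed S -> ~ S 0 ->
  (forall S', mul_closed S' -> ~ S' 0 -> S `<=` S' -> S' `<=` S) ->
  forall a, ~ S a -> exists s n, S s /\ s * a ^+ n = 0.
Proof.
move=> [S1 SM] S0 Smax a Sa; apply: contrapT => noann; apply: Sa.
pose Sa z := exists s n, S s /\ z = s * a ^+ n.
apply: (Smax Sa).
- split=> [|_ _ [s [n [Ss ->]]] [t [k [St ->]]]].
    by exists 1, 0%N; rewrite mulr1.
  by exists (s * t), (n + k)%N; split; [apply: SM | rewrite exprD; ring].
- by move=> [s [n [Ss sn]]]; apply: noann; exists s, n.
- by move=> s Ss; exists s, 0%N; rewrite mulr1.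
- by exists 1, 1%N; rewrite mul1r.
Qed.

Lemma compl_prime_ideal S :
  mul_closed S -> ~ S 0 -> (forall a, ~ S a -> exists s n, S s /\ s * a ^+ n = 0) ->
  prime_ideal (~` S).
Proof.
move=> Smul S0 Sann; have [S1 SM] := Smul.
split; [split; [split; [|split] |] |].
- exact: S0.
- move=> x y /Sann [s [n [Ss sxn]]] /Sann [t [k [St tyk]]] Sxy; apply: S0.
  rewrite -(mulr_exprD_eq0 sxn tyk).
  exact: SM (SM _ _ Ss St) (mul_closed_exp _ Smul Sxy).
- move=> a x /Sann [s [n [Ss sxn]]] Sax; apply: S0.
  rewrite -(mulr0 (a ^+ n)) -sxn mulrCA -exprMn.
  exact: SM Ss (mul_closed_exp _ Smul Sax).
- by move=> /(_ S1).
- move=> a b Sab; have [Sa|] := pselect (S a); last by left.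
  by right=> Sb; apply: Sab; apply: SM.
Qed.

(* p R_p is a nil ideal of R_p *)
Definition loc_nil p := forall s, p s -> exists n, loc_ker p (s ^+ n).

Lemma exists_loc_nil_prime_sub m :
  prime_ideal m -> exists p, [/\ prime_ideal p, p `<=` m & loc_nil p].
Proof.
move=> pm; have [[[m0 _] m1] _] := pm.
pose P S := [/\ mul_closed S, ~ S 0 & ~` m `<=` S].
have [S [Smul S0 mS] Smax] : exists2 S, P S & forall S', P S' -> S `<=` S' -> S' `<=` S.
  apply: (Zorn_nonempty_chains (X0 := ~` m)) => [|F FP Ftot Fn0].
    by split=> //; split=> // a b; apply: prime_nmul.
  split; first by apply: mul_closed_bigcup => // S /FP [].
    by move=> [S /FP [] _ S0 _].
  by case: Fn0 => S FS x mx; exists S => //; case: (FP _ FS) => _ _; apply.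
have Sann := maximal_mul_closed_ann Smul S0 (fun S' Smul' S0' SS' =>
  Smax S' (And3 Smul' S0' (subset_trans mS SS')) SS').
exists (~` S); split; first exact: compl_prime_ideal.
- by move=> x Sx; apply: contrapT => mx; apply: Sx; apply: mS.
- move=> s /Sann [t [n [St tsn]]]; exists n; apply/loc_kerP.
  by exists t => // /(_ St).
Qed.

Lemma loc_nil_minimal p : prime_ideal p -> loc_nil p -> minimal_prime p.
Proof.
move=> pp pnil; split=> // q pq qp x px.
have [n /loc_kerP [u pu uxn]] := pnil x px.
apply: contrapT => qx; have [[[q0 _] _] _] := pq.
have : q (u * x ^+ n) by rewrite uxn.
by apply: prime_nmul => //; [move/qp | apply: prime_nexp].
Qed.

Lemma loc_nil_primary p : prime_ideal p -> loc_nil p -> primary_ideal (loc_ker p).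
Proof.
move=> pp pnil; split=> [|x y Kxy Kx]; first exact: loc_ker_proper.
have [py|py] := pselect (p y); first exact: pnil.
case: Kx; move/loc_kerP: Kxy => [u pu uxy]; apply/loc_kerP.
by exists (u * y); [apply: prime_nmul | rewrite mulrAC -mulrA].
Qed.

Lemma loc_ker_pure_sub p m :
  prime_ideal p -> Defs.proper_ideal m -> p `<=` m -> pure_ideal (loc_ker p) ->
  loc_ker m = loc_ker p.
Proof.
move=> pp mproper pm pure; apply/funext => a; apply/propext; split.
  by move=> /loc_kerP [u mu ua]; apply/loc_kerP; exists u => // /pm.
move=> Ka; have [g [Kg ag]] := pure a Ka; apply/loc_kerP; exists (1 - g).
  by apply: proper_ideal_1B => //; apply/pm/(loc_ker_sub pp).
by rewrite mulrC.
Qed.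

End MinimalPrimes.

Section PrimaryKernels.
Variable R : comPzRingType.
Hypothesis loc_ker_max_primary :
  forall m : set R, maximal_ideal m -> primary_ideal (loc_ker m).
Implicit Types (I p : set R) (f x : R).

Lemma Ann_comaximal f x I :
  is_ideal I -> x * f = 0 -> (forall v n, v * x ^+ n = 0 -> I v) ->
  ideal_add (Ann f) I 1.
Proof.
move=> Iideal xf xI; apply: contrapT => J1.
have [m mmax Jm] := ideal_sub_maximal (is_ideal_add (is_ideal_Ann f) Iideal) J1.
have [_ Kprimary] := loc_ker_max_primary mmax.
have [[_ m1] _] := maximal_prime mmax.
have [||n /loc_kerP [v mv vxn]] := Kprimary f x.
- by apply/loc_kerP; exists 1; rewrite // mul1r mulrC.
- move=> /loc_kerP [u mu uf]; apply: mu; apply: Jm.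
  by exists u; rewrite // subrr; case: Iideal.
- by apply: mv; apply: Jm; exists 0; rewrite /Ann ?mul0r ?subr0 //; apply: xI vxn.
Qed.

Lemma quasi_pf_of_loc_ker_primary : quasi_pf_ring R.
Proof.
move=> f x xf.
have [|g gf xg] := Ann_comaximal (is_ideal_nilpotentM x) xf; last by exists g.
move=> v n vxn; exists n.+1.
have -> : (x * v) ^+ n.+1 = v * x ^+ n * (x * v ^+ n) by rewrite exprMn !exprS; ring.
by rewrite vxn mul0r.
Qed.

Lemma pure_loc_ker p : prime_ideal p -> pure_ideal (loc_ker p).
Proof.
move=> pp a /loc_kerP [u pu ua].
have [|g ga Kg] := Ann_comaximal (loc_ker_ideal pp) ua.
  move=> v n vun; apply/loc_kerP; exists (u ^+ n); first exact: prime_nexp.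
  by rewrite mulrC.
by exists (1 - g); rewrite subKr mulrC.
Qed.

End PrimaryKernels.

Theorem theorem4p1 (R : comPzRingType) :
  [<-> quasi_pf_ring R;
       forall p : R -> Prop, prime_ideal p -> localization_primary p;
       forall m : R -> Prop, maximal_ideal m -> localization_primary m;
       forall p : R -> Prop, minimal_prime p -> pure_ideal (loc_ker p);
       forall m : R -> Prop, maximal_ideal m -> primary_ideal (loc_ker m)].
Proof.
tfae.
- move=> qpf p pp; apply/localization_primaryE => //.
  exact: quasi_pf_loc_ker_primary.
- by move=> lp m /maximal_prime; apply: lp.
- move=> lm p [pp _]; apply: pure_loc_ker => // m mm.
  by apply/localization_primaryE; [apply: maximal_prime | apply: lm].
- move=> pure m mm; have pm := maximal_prime mm.
  have [p [pp pm_sub pnil]] := exists_loc_nil_prime_sub pm.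
  rewrite (loc_ker_pure_sub pp pm.1 pm_sub (pure _ (loc_nil_minimal pp pnil))).
  exact: loc_nil_primary.
- exact: quasi_pf_of_loc_ker_primary.
Qed.
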